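(* For every $u\in V$, $\Pr(E_u)=\mathcal{O}\left(\log^{-1} n\right)$ as $n\to\infty$, with the implied constant independent of $u$; here $E_u$ is the event that there exists a C3 rooted at $u$ whose type is one of the seven words in $\{s,w\}^3\setminus\{(s,s,s)\}$ (i.e., containing at least one $w$).
   Context: For an integer $n\ge1$, the $n$-octahedral graph $G'_n=(V,E')$ is the undirected graph with vertex set $V=\{u\in\mathbb{Z}^3:|u_1|+|u_2|+|u_3|=n\}$ and edge set $E'=\{\{v,w\}\subset V: v\neq w,\ |v_i-w_i|\le 1 \text{ for all } i=1,2,3\}$. For $u,v\in V$, $d_{uv}$ denotes the shortest-path distance in $G'_n$, and $Z_u=\left(\sum_{w\in V\setminus\{u\}} d_{uw}^{-2}\right)^{-1}$. The OSW random graph $G_n=(V,E)$ is the directed graph in which, for every $\{u,v\}\in E'$, both $(u,v),(v,u)\in E$, and in addition each vertex $u\in V$, independently of the others, chooses one vertex $v\in V\setminus\{u\}$ with probability $Z_u d_{uv}^{-2}$ and the long-range edge $(u,v)$ is added; $C_{uv}$ denotes the event that $u$ chooses $v$. For an ordered pair $(x,y)$ of distinct vertices, say $(x,y)$ is of type $s$ if $\{x,y\}\in E'$, and of type $w$ if $d_{xy}\ge2$ and $C_{xy}$ occurs. A C3 rooted at $u$ of type $(t_1,t_2,t_3)\in\{s,w\}^3$ is a triple $(u,a,b)$ of pairwise distinct vertices such that $(u,a)$ is of type $t_1$, $(a,b)$ is of type $t_2$ and $(b,u)$ is of type $t_3$. *)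

From Stdlib Require Import Reals.
From HB Require Import structures.
From mathcomp Require Import all_boot.
Set Implicit Arguments. Unset Strict Implicit. Unset Printing Implicit Defensive.

Definition absdiff (a b : nat) : nat := (a - b) + (b - a).

(* Encoding: an integer coordinate u_i with |u_i| <= n is stored as u_i + n
   in 'I_(2n+1).  Differences of coordinates are preserved by the shift. *)
Notation coord n := 'I_(n.*2.+1).
Notation pt n := (coord n * coord n * coord n)%type.

Definition on_octa (n : nat) (x : pt n) : bool :=
  let '(a, b, c) := x in
  absdiff a n + absdiff b n + absdiff c n == n.

Notation vert n := {x : pt n | @on_octa n x}.

Definition sedge (n : nat) (v w : vert n) : bool :=
  let '(a1, a2, a3) := val v in
  let '(b1, b2, b3) := val w in
  [&& v != w, absdiff a1 b1 <= 1, absdiff a2 b2 <= 1 & absdiff a3 b3 <= 1].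

Definition reach (n : nat) (u v : vert n) (k : nat) : bool :=
  [exists p : k.-tuple (vert n), path (@sedge n) u p && (last u p == v)].

(* shortest-path distance d_uv in G'_n (G'_n is connected, and any shortest
   path has length < |V|, so the search range suffices) *)
Definition dist (n : nat) (u v : vert n) : nat :=
  find (reach u v) (iota 0 #|{: vert n}|).

Definition Zu (n : nat) (u : vert n) : R :=
  Rinv (\big[Rplus/R0]_(w : vert n | w != u) Rinv ((INR (dist u w)) ^ 2)).

Definition pchoose (n : nat) (u v : vert n) : R :=
  Rmult (Zu u) (Rinv ((INR (dist u v)) ^ 2)).

Definition valid_choice (n : nat) (c : {ffun vert n -> vert n}) : bool :=
  [forall u, c u != u].

Definition weight (n : nat) (c : {ffun vert n -> vert n}) : R :=
  \big[Rmult/R1]_(x : vert n) pchoose x (c x).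

Definition type_s (n : nat) (x y : vert n) : bool := sedge x y.
Definition type_w (n : nat) (c : {ffun vert n -> vert n}) (x y : vert n) : bool :=
  (2 <= dist x y) && (c x == y).

Definition typed (n : nat) (c : {ffun vert n -> vert n}) (x y : vert n) : bool :=
  type_s x y || type_w c x y.

Definition E_ev (n : nat) (u : vert n) (c : {ffun vert n -> vert n}) : bool :=
  [exists a : vert n, exists b : vert n,
    [&& a != u, b != u, a != b,
        typed c u a, typed c a b, typed c b u &
        [|| type_w c u a, type_w c a b | type_w c b u]]].

Definition prob_E (n : nat) (u : vert n) : R :=
  \big[Rplus/R0]_(c : {ffun vert n -> vert n} | valid_choice c && E_ev u c)
     weight c.

(* On E_u there is a triangle u -> a -> b -> u whose edges are edges of G'_n or
   long-range choices, and at least one of them is a choice x -> y with d_xy >= 2,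
   which has probability Z_x d_xy^-2 <= Z_x / 4. In a union bound over the triangle
   and its type, the two other edges contribute a factor at most 27 each: a vertex
   has at most 27 neighbours in G'_n, and the choice probabilities of a vertex sum
   to 1 (the choices being independent). Hence Pr(E_u) <= 8 * 27^2 * max_x Z_x / 4.
   On the other hand 1 / Z_x = sum_w d_xw^-2 >= ln n - 4: if |x_3| >= n / 3, moving i
   steps outwards in the first coordinate, j in the second and i + j inwards in the
   third gives distinct vertices within distance i + j of x, and
   sum_{i, j <= m} (i + j + 1)^-2 >= ln (m + 1) - 1. *)

From Stdlib Require Import Reals Lra.
From HB Require Import structures.
From mathcomp Require Import all_boot zify.
Set Implicit Arguments. Unset Strict Implicit. Unset Printing Implicit Defensive.

HB.instance Definition _ :=
  Monoid.isComLaw.Build R R0 Rplus (fun x y z => esym (Rplus_assoc x y z)) Rplus_comm Rplus_0_l.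
HB.instance Definition _ :=
  Monoid.isComLaw.Build R R1 Rmult (fun x y z => esym (Rmult_assoc x y z)) Rmult_comm Rmult_1_l.
HB.instance Definition _ := Monoid.isMulLaw.Build R R0 Rmult Rmult_0_l Rmult_0_r.
HB.instance Definition _ :=
  Monoid.isAddLaw.Build R Rmult Rplus Rmult_plus_distr_r Rmult_plus_distr_l.

Local Open Scope R_scope.

Lemma Rinv_ge0 (r : R) : 0 <= r -> 0 <= / r.
Proof.
move=> r_ge0; have [->|r_neq0] := Req_dec r 0; first by rewrite Rinv_0; lra.
by apply/Rlt_le/Rinv_0_lt_compat; lra.
Qed.

Lemma ln_le (x y : R) : 0 < x -> x <= y -> ln x <= ln y.
Proof.
move=> x_gt0 /Rle_lt_or_eq_dec [xy|->]; last lra.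
exact/Rlt_le/ln_increasing.
Qed.

Section RealBigops.
Variable I : Type.
Implicit Types (r : seq I) (P : pred I) (F G : I -> R).

Lemma ler_sumR r P F G :
  (forall i, P i -> F i <= G i) ->
  \big[Rplus/R0]_(i <- r | P i) F i <= \big[Rplus/R0]_(i <- r | P i) G i.
Proof. by move=> FG; apply: (big_ind2 Rle) => // *; lra. Qed.

Lemma sumR_ge0 r P F :
  (forall i, P i -> 0 <= F i) -> 0 <= \big[Rplus/R0]_(i <- r | P i) F i.
Proof. by move=> F_ge0; apply: (big_ind (Rle 0)) => // *; lra. Qed.

Lemma prodR_ge0 r P F :
  (forall i, P i -> 0 <= F i) -> 0 <= \big[Rmult/R1]_(i <- r | P i) F i.
Proof. by move=> F_ge0; apply: (big_ind (Rle 0)) => // *; [lra|apply: Rmult_le_pos]. Qed.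

Lemma ler_prodR r P F G :
  (forall i, P i -> 0 <= F i <= G i) ->
  \big[Rmult/R1]_(i <- r | P i) F i <= \big[Rmult/R1]_(i <- r | P i) G i.
Proof.
move=> FG; suff [] : 0 <= \big[Rmult/R1]_(i <- r | P i) F i <=
                     \big[Rmult/R1]_(i <- r | P i) G i by [].
apply: (big_ind2 (fun x y => 0 <= x <= y)) => //; first lra.
move=> x1 x2 y1 y2 [? ?] [? ?]; split; first exact: Rmult_le_pos.
exact: Rmult_le_compat.
Qed.

End RealBigops.

Lemma ler_sumR_term (I : finType) (P : pred I) (F : I -> R) j :
  (forall i, P i -> 0 <= F i) -> P j -> F j <= \big[Rplus/R0]_(i | P i) F i.
Proof.
move=> F_ge0 Pj; rewrite (bigD1 j) //=.
suff : 0 <= \big[Rplus/R0]_(i | P i && (i != j)) F i by lra.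
by apply: sumR_ge0 => i /andP [/F_ge0].
Qed.

Lemma ler_sumR_sub (I : finType) (A : {pred I}) (P : pred I) (F : I -> R) :
  (forall i, i \in A -> P i) -> (forall i, P i -> 0 <= F i) ->
  \big[Rplus/R0]_(i in A) F i <= \big[Rplus/R0]_(i | P i) F i.
Proof.
move=> AP F_ge0; rewrite big_mkcond [X in _ <= X]big_mkcond.
apply: ler_sumR => i _; case: ifP => [/AP -> | _]; first lra.
by case: ifP => [/F_ge0 | _]; lra.
Qed.

Lemma sumR_ord_recr (K : nat) (F : nat -> R) :
  \big[Rplus/R0]_(i < K.+1) F i = \big[Rplus/R0]_(i < K) F i + F K.
Proof. by rewrite big_ord_recr. Qed.

Lemma sumR_const (I : finType) (c : R) :
  \big[Rplus/R0]_(i : I) c = INR #|I| * c.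
Proof.
rewrite big_const cardE; elim: (size _) => [|k IH] /=; first lra.
by rewrite IH; case: k {IH} => [|k] /=; lra.
Qed.

Lemma sumR_indicator (I : finType) (P : pred I) :
  \big[Rplus/R0]_(i : I) (if P i then 1 else 0) = INR #|P|.
Proof.
rewrite -big_mkcond -sum1_card (big_morph INR plus_INR (erefl (INR 0))).
by apply: eq_bigr.
Qed.

Lemma sumR_union_le (I J : finType) (P : pred J) (Q : I -> pred J) (F : J -> R) :
  (forall j, 0 <= F j) -> (forall j, P j -> exists i, Q i j) ->
  \big[Rplus/R0]_(j | P j) F j <= \big[Rplus/R0]_i \big[Rplus/R0]_(j | Q i j) F j.
Proof.
move=> F_ge0 PQ; rewrite big_mkcond (exchange_big_dep xpredT) //=.
apply: ler_sumR => j _; case: ifP => [/PQ [i Qij] | _].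
  exact: (@ler_sumR_term _ _ (fun=> F j) i).
by apply: sumR_ge0.
Qed.

(** * Distances and neighbourhoods in G'_n *)

Lemma absdiffC (a b : nat) : absdiff a b = absdiff b a.
Proof. by rewrite /absdiff addnC. Qed.

Lemma absdiffnn (a : nat) : absdiff a a = 0%N.
Proof. by rewrite /absdiff subnn. Qed.

Lemma sedgeC n (x y : vert n) : sedge x y = sedge y x.
Proof.
rewrite /sedge; case: (val x) => [[a1 a2] a3]; case: (val y) => [[b1 b2] b3].
by rewrite eq_sym (absdiffC a1) (absdiffC a2) (absdiffC a3).
Qed.

Section Distance.
Variable n : nat.
Implicit Types x y z : vert n.

Lemma reach0 x y : reach x y 0 -> y = x.
Proof. by move=> /existsP [p /andP [_ /eqP]]; rewrite (tuple0 p) /= => ->. Qed.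

Lemma reach_refl x : reach x x 0.
Proof. by apply/existsP; exists [tuple]; rewrite /= eqxx. Qed.

Lemma reach_step x y z k : reach x y k -> sedge y z -> reach x z k.+1.
Proof.
move=> /existsP [p /andP [xp /eqP py]] yz; apply/existsP; exists (rcons_tuple p z).
by rewrite /= rcons_path last_rcons xp py yz eqxx.
Qed.

Lemma dist_refl x : dist x x = 0%N.
Proof.
rewrite /dist; have : (0 < #|{: vert n}|)%N by apply/card_gt0P; exists x.
by case: #|_| => // k _; rewrite /= reach_refl.
Qed.

Lemma dist_gt0 x y : y != x -> (0 < dist x y)%N.
Proof.
move=> yx; rewrite /dist; have : (0 < #|{: vert n}|)%N by apply/card_gt0P; exists x.
case: #|_| => // k _ /=.
by case: ifP => // /reach0 /eqP; rewrite (negbTE yx).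
Qed.

Lemma dist_le_reach x y k : reach x y k -> (dist x y <= k)%N.
Proof.
move=> xy_k; rewrite /dist; have [k_lt|k_ge] := ltnP k #|{: vert n}|.
  rewrite leqNgt; apply/negP => /(before_find 0%N).
  by rewrite nth_iota // xy_k.
by apply: leq_trans (find_size _ _) _; rewrite size_iota.
Qed.

End Distance.

(* A neighbour [y] of [x] is determined by the offsets [y_i - x_i + 1] in [{0,1,2}]. *)
Definition offset n (a b : coord n) : 'I_3 := inord (b + 1 - a).

Lemma offset_inj n (a b b' : coord n) :
  (absdiff a b <= 1)%N -> (absdiff a b' <= 1)%N -> offset a b = offset a b' -> b = b'.
Proof.
rewrite /offset /absdiff => ab ab' /(congr1 val) /=.
rewrite !inordK; [|lia|lia] => e; apply: val_inj => /=; lia.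
Qed.

Lemma card_sedge_le n (x : vert n) : (#|[pred y | sedge x y]| <= 27)%N.
Proof.
pose offsets (y : vert n) : 'I_3 * 'I_3 * 'I_3 :=
  let '(a1, a2, a3) := val x in let '(b1, b2, b3) := val y in
  (offset a1 b1, offset a2 b2, offset a3 b3).
have inj : {in [pred y | sedge x y] &, injective offsets}.
  move=> y y'; rewrite !inE /sedge /offsets.
  case Ey: (val y) => [[b1 b2] b3]; case Ey': (val y') => [[c1 c2] c3].
  case: (val x) => [[a1 a2] a3] /and4P [_ h1 h2 h3] /and4P [_ h1' h2' h3'] [e1 e2 e3].
  apply: val_inj; rewrite Ey Ey'.
  by rewrite (offset_inj h1 h1' e1) (offset_inj h2 h2' e2) (offset_inj h3 h3' e3).
rewrite -(card_in_imset inj); apply: leq_trans (max_card _) _.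
by rewrite !card_prod !card_ord.
Qed.

Lemma sum_sedge_le n (x : vert n) :
  \big[Rplus/R0]_(y : vert n) (if sedge x y then 1 else 0) <= 27.
Proof.
rewrite (sumR_indicator [pred y | sedge x y]).
by have /leP/le_INR := card_sedge_le x; rewrite [INR 27]INR_IZR_INZ.
Qed.

Section Choices.
Variable n : nat.
Implicit Types (u v x y : vert n) (c : {ffun vert n -> vert n}).

Definition Zsum u : R := \big[Rplus/R0]_(w : vert n | w != u) / INR (dist u w) ^ 2.

Lemma Zsum_ge0 u : 0 <= Zsum u.
Proof. by apply: sumR_ge0 => w _; apply/Rinv_ge0/pow2_ge_0. Qed.

Lemma pchoose_ge0 u v : 0 <= pchoose u v.
Proof. by apply: Rmult_le_pos; apply/Rinv_ge0; [apply: Zsum_ge0 | apply: pow2_ge_0]. Qed.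

(* The term [v = u] vanishes because [/ 0 = 0]. *)
Lemma sum_pchoose_le1 u : \big[Rplus/R0]_v pchoose u v <= 1.
Proof.
rewrite /pchoose -big_distrr (bigD1 u) //= dist_refl /= Rmult_0_l Rinv_0 Rplus_0_l.
rewrite /Zu -/(Zsum u); have [->|Z_neq0] := Req_dec (Zsum u) 0; first by rewrite Rinv_0; lra.
by rewrite Rinv_l //; lra.
Qed.

Lemma pchoose_far_le u v : (2 <= dist u v)%N -> pchoose u v <= Zu u / 4.
Proof.
move=> /leP/le_INR; rewrite [INR 2]/= => far.
apply: Rmult_le_compat_l; first by apply/Rinv_ge0/Zsum_ge0.
by apply: Rinv_le_contravar; nra.
Qed.

Lemma weight_ge0 c : 0 <= weight c.
Proof. by apply: prodR_ge0 => x _; apply: pchoose_ge0. Qed.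

Definition extends (g : vert n -> option (vert n)) c : bool :=
  [forall x, if g x is Some y then c x == y else true].

Definition pchoose_opt x (o : option (vert n)) : R := if o is Some y then pchoose x y else 1.

(* The sum of the product [weight c] factorises; a vertex left free by [g]
   contributes [sum_v pchoose x v <= 1]. *)
Lemma prob_extends_le (g : vert n -> option (vert n)) :
  \big[Rplus/R0]_(c | extends g c) weight c <= \big[Rmult/R1]_x pchoose_opt x (g x).
Proof.
pose F x y := if g x is Some t then (if y == t then pchoose x y else 0) else pchoose x y.
have F_ge0 x y : 0 <= F x y.
  by rewrite /F; case: (g x) => [t|]; [case: (y == t); [apply: pchoose_ge0|lra]|apply: pchoose_ge0].
have -> : \big[Rplus/R0]_(c | extends g c) weight c =
          \big[Rplus/R0]_(c : {ffun vert n -> vert n}) \big[Rmult/R1]_x F x (c x).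
  rewrite big_mkcond /=; apply: eq_bigr => c _; rewrite /weight.
  case: (boolP (extends g c)) => [/forallP gc | /forallPn [x gxc]].
    apply: eq_bigr => x _; rewrite /F; move: (gc x).
    by case: (g x) => //= t /eqP ->; rewrite eqxx.
  rewrite (bigD1 x) //= /F; case: (g x) gxc => //= t /negbTE ->.
  by rewrite Rmult_0_l.
rewrite -bigA_distr_bigA; apply: ler_prodR => x _; split; first exact: sumR_ge0.
rewrite /F /pchoose_opt; case: (g x) => [t|]; last exact: sum_pchoose_le1.
rewrite (bigD1 t) //= eqxx big1 => [|y /negbTE -> //]; lra.
Qed.

End Choices.

(** * Union bound over the C3s rooted at u *)

(* The type of a C3 as a triple of booleans, [true] standing for a long-range edge [w]. *)
Notation c3type := (bool * bool * bool)%type.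

Section Triangles.
Variable n : nat.
Implicit Types (u a b x y : vert n) (c : {ffun vert n -> vert n}) (t : c3type).

Definition has_w t : bool := [|| t.1.1, t.1.2 | t.2].

(* The part of "[(x, y)] has type [w] (or [s])" that does not depend on the choices. *)
Definition admissible (w : bool) x y : bool := if w then (2 <= dist x y)%N else sedge x y.

Definition c3_shape u a b t : bool :=
  [&& a != u, b != u, a != b, has_w t,
      admissible t.1.1 u a, admissible t.1.2 a b & admissible t.2 b u].

Definition c3_choice u a b t (x : vert n) : option (vert n) :=
  if x == u then (if t.1.1 then Some a else None)
  else if x == a then (if t.1.2 then Some b else None)
  else if x == b then (if t.2 then Some u else None) else None.

Definition edge_mass (w : bool) x y : R :=
  if w then (if (2 <= dist x y)%N then pchoose x y else 0)
  else (if sedge x y then 1 else 0).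

Lemma edge_mass_ge0 w x y : 0 <= edge_mass w x y.
Proof. by rewrite /edge_mass; case: w; case: ifP => _; try lra; apply: pchoose_ge0. Qed.

Lemma admissible_typed c x y : typed c x y -> admissible (type_w c x y) x y.
Proof.
rewrite /typed /admissible; case w_xy: (type_w c x y); last by rewrite orbF.
by case/andP: w_xy.
Qed.

Lemma E_ev_witness u c :
  E_ev u c -> exists i : c3type * (vert n * vert n),
    c3_shape u i.2.1 i.2.2 i.1 && extends (c3_choice u i.2.1 i.2.2 i.1) c.
Proof.
move=> /existsP [a /existsP [b /and5P [au bu ab ua /and3P [ab' bu' has]]]].
exists ((type_w c u a, type_w c a b, type_w c b u), (a, b)); apply/andP; split.
  by rewrite /c3_shape /has_w /= au bu ab has !admissible_typed.
apply/forallP => x; rewrite /c3_choice /=.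
case: (x =P u) => [->|_]; first by case: ifP => // /andP [].
case: (x =P a) => [->|_]; first by case: ifP => // /andP [].
by case: (x =P b) => [->|_] //; case: ifP => // /andP [].
Qed.

Lemma pchoose_opt_c3_choice u a b t :
  c3_shape u a b t ->
  \big[Rmult/R1]_x pchoose_opt x (c3_choice u a b t x) =
  edge_mass t.1.1 u a * edge_mass t.1.2 a b * edge_mass t.2 b u.
Proof.
case/and5P=> au bu ab _ /and3P [ua_ok ab_ok bu_ok].
rewrite (bigD1 u) //= (bigD1 a) /= ?au // (bigD1 b) /= ?bu ?(eq_sym b a) ?ab //.
rewrite big1 => [|x /andP [/andP [/negbTE xu /negbTE xa] /negbTE xb]]; last first.
  by rewrite /c3_choice xu xa xb.
rewrite /c3_choice eqxx (negbTE au) eqxx (negbTE bu) eq_sym (negbTE ab) eqxx Rmult_1_r.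
have mass w x y : admissible w x y -> pchoose_opt x (if w then Some y else None) = edge_mass w x y.
  by rewrite /admissible /edge_mass; case: w => /= ->.
by rewrite (mass _ _ _ ua_ok) (mass _ _ _ ab_ok) (mass _ _ _ bu_ok); ring.
Qed.

Lemma prob_E_le_sum_c3 u :
  prob_E u <= \big[Rplus/R0]_(t : c3type) \big[Rplus/R0]_a \big[Rplus/R0]_b
    (if has_w t then edge_mass t.1.1 u a * edge_mass t.1.2 a b * edge_mass t.2 b u else 0).
Proof.
pose Q (i : c3type * (vert n * vert n)) c :=
  c3_shape u i.2.1 i.2.2 i.1 && extends (c3_choice u i.2.1 i.2.2 i.1) c.
apply: Rle_trans (@sumR_union_le _ _ _ Q _ (@weight_ge0 n) _) _.
  by move=> c /andP [_ /E_ev_witness].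
under [X in _ <= X]eq_bigr => t _ do rewrite pair_bigA.
rewrite pair_bigA; apply: ler_sumR => -[t [a b]] _ /=.
have [shape|not_shape] := boolP (c3_shape u a b t).
  case/and5P: (shape) => _ _ _ -> _; rewrite -pchoose_opt_c3_choice //.
  apply: Rle_trans (prob_extends_le _); apply: Req_le.
  by apply: eq_bigl => c; rewrite /Q shape.
rewrite big_pred0 => [|c]; last by rewrite /Q (negbTE not_shape).
case: ifP => _; [|lra].
by apply: Rmult_le_pos; [apply: Rmult_le_pos|]; apply: edge_mass_ge0.
Qed.

End Triangles.

Arguments edge_mass : simpl never.

Lemma ler_sum_chain (I J : finType) (A : I -> R) (B C : I -> J -> R) (K1 K2 Q : R) :
  0 <= K2 -> 0 <= Q -> (forall i, 0 <= A i) -> (forall i j, 0 <= B i j) ->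
  (forall i j, 0 <= C i j <= Q) ->
  \big[Rplus/R0]_i A i <= K1 -> (forall i, \big[Rplus/R0]_j B i j <= K2) ->
  \big[Rplus/R0]_i \big[Rplus/R0]_j (A i * B i j * C i j) <= K1 * K2 * Q.
Proof.
move=> K2_ge0 Q_ge0 A_ge0 B_ge0 C_le sumA sumB.
apply: (@Rle_trans _ (\big[Rplus/R0]_i (A i * (K2 * Q)))).
  apply: ler_sumR => i _; apply: (@Rle_trans _ (\big[Rplus/R0]_j (A i * Q * B i j))).
    apply: ler_sumR => j _; replace (A i * Q * B i j) with (A i * B i j * Q) by ring.
    by apply: Rmult_le_compat_l (C_le i j).2; apply: Rmult_le_pos.
  rewrite -big_distrr /=; replace (A i * (K2 * Q)) with (A i * Q * K2) by ring.
  by apply: Rmult_le_compat_l (sumB i); apply: Rmult_le_pos.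
rewrite -big_distrl /= Rmult_assoc.
by apply: Rmult_le_compat_r sumA; apply: Rmult_le_pos.
Qed.

Section MassBounds.
Variables (n : nat) (Zmax : R).
Hypothesis Zu_le : forall x : vert n, Zu x <= Zmax.
Implicit Types (u a b x y : vert n) (t : c3type).

Lemma Zmax_ge0 x : 0 <= Zmax.
Proof. by apply: Rle_trans (Zu_le x); apply/Rinv_ge0/Zsum_ge0. Qed.

Lemma long_mass_le x y : 0 <= edge_mass true x y <= Zmax / 4.
Proof.
split; first exact: edge_mass_ge0.
have := Zmax_ge0 x; rewrite /edge_mass; case: ifP => [far|_]; last lra.
by have := pchoose_far_le far; have := Zu_le x; lra.
Qed.

Lemma sum_mass_out_le w x : \big[Rplus/R0]_y edge_mass w x y <= 27.
Proof.
case: w; last exact: sum_sedge_le.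
apply: (@Rle_trans _ (\big[Rplus/R0]_y pchoose x y)); last by have := sum_pchoose_le1 x; lra.
by apply: ler_sumR => y _; rewrite /edge_mass; case: ifP => _; [lra | apply: pchoose_ge0].
Qed.

Lemma sum_short_mass_in_le y : \big[Rplus/R0]_x edge_mass false x y <= 27.
Proof. by under eq_bigr => x _ do rewrite /edge_mass sedgeC; apply: sum_sedge_le. Qed.

Lemma sum_c3_mass_le u t :
  \big[Rplus/R0]_a \big[Rplus/R0]_b
    (if has_w t then edge_mass t.1.1 u a * edge_mass t.1.2 a b * edge_mass t.2 b u else 0)
  <= 27 * 27 * (Zmax / 4).
Proof.
have Q_ge0 : 0 <= Zmax / 4 by have := Zmax_ge0 u; lra.
have m_ge0 := @edge_mass_ge0 n.
have chain := ler_sum_chain (ltac:(lra) : 0 <= 27) Q_ge0.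
case: t => [[w1 w2] [|]]; rewrite /has_w /= ?orbT /=.
  apply: chain (sum_mass_out_le _ _) (sum_mass_out_le _) => // *.
  exact: long_mass_le.
case: w2; rewrite ?orbT /=.
  under eq_bigr => a _ do under eq_bigr => b _ do
    rewrite Rmult_assoc (Rmult_comm (edge_mass true a b)) -Rmult_assoc.
  apply: chain (sum_mass_out_le _ _) (fun=> sum_short_mass_in_le u) => // *.
  exact: long_mass_le.
case: w1 => /=; last by rewrite big1 => [|a _]; [lra | rewrite big1].
rewrite exchange_big; under eq_bigr => b _ do under eq_bigr => a _ do
  rewrite Rmult_comm (Rmult_comm (edge_mass true u a)) -Rmult_assoc.
apply: chain (sum_short_mass_in_le u) sum_short_mass_in_le => // *.
exact: long_mass_le.
Qed.

Lemma prob_E_le_Zmax u : prob_E u <= 1458 * Zmax.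
Proof.
apply: Rle_trans (prob_E_le_sum_c3 u) _.
apply: (@Rle_trans _ (\big[Rplus/R0]_(t : c3type) (27 * 27 * (Zmax / 4)))).
  by apply: ler_sumR => t _; apply: sum_c3_mass_le.
rewrite sumR_const !card_prod card_bool /=; lra.
Qed.

End MassBounds.

(** * Growth of the normalising sum *)

(* With the shifted encoding, [step_out] moves a coordinate [i] units away from the
   origin and [step_in] moves it [k] units towards it. *)
Section Steps.
Local Open Scope nat_scope.

Definition step_out (n A i : nat) : nat := if n <= A then A + i else A - i.
Definition step_in (n A k : nat) : nat := if n <= A then A - k else A + k.

Lemma step_out_spec n A i : A <= n.*2 -> absdiff A n + i <= n ->
  step_out n A i <= n.*2 /\ absdiff (step_out n A i) n = absdiff A n + i.
Proof. by rewrite /step_out /absdiff -muln2; case: (leqP n A); lia. Qed.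

Lemma step_in_spec n A k : A <= n.*2 -> k <= absdiff A n ->
  step_in n A k <= n.*2 /\ absdiff (step_in n A k) n = absdiff A n - k.
Proof. by rewrite /step_in /absdiff -muln2; case: (leqP n A); lia. Qed.

Lemma absdiff_step_out n A i i' : absdiff A n + i <= n -> absdiff A n + i' <= n ->
  absdiff (step_out n A i) (step_out n A i') = absdiff i i'.
Proof. by rewrite /step_out /absdiff; case: (leqP n A); lia. Qed.

Lemma absdiff_step_in n A k k' : k <= absdiff A n -> k' <= absdiff A n ->
  absdiff (step_in n A k) (step_in n A k') = absdiff k k'.
Proof. by rewrite /step_in /absdiff; case: (leqP n A); lia. Qed.

Lemma step_out0 n A : step_out n A 0 = A.
Proof. by rewrite /step_out addn0 subn0; case: ifP. Qed.

Lemma step_in0 n A : step_in n A 0 = A.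
Proof. by rewrite /step_in addn0 subn0; case: ifP. Qed.

Lemma coord_le n (A : coord n) : A <= n.*2.
Proof. by rewrite -ltnS ltn_ord. Qed.

Lemma absdiff_sum_octa n (x : vert n) A1 A2 A3 : val x = (A1, A2, A3) ->
  absdiff A1 n + absdiff A2 n + absdiff A3 n = n.
Proof. by move=> x_def; have := valP x; rewrite x_def => /eqP. Qed.

End Steps.

(* Going [i] and [j] steps outwards in the first two coordinates and [i + j] steps
   inwards in the third one stays on the octahedron as long as [i + j <= |x_3|]. *)
Section Grid.
Variables (n : nat) (x : vert n) (A1 A2 A3 : coord n).
Hypothesis x_def : val x = (A1, A2, A3).
Local Open Scope nat_scope.

Definition grid_pt i j : pt n :=
  (inord (step_out n A1 i), inord (step_out n A2 j), inord (step_in n A3 (i + j))).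

Definition grid i j : vert n := insubd x (grid_pt i j).

Lemma grid_pt_coords i j : i + j <= absdiff A3 n ->
  [/\ (grid_pt i j).1.1 = step_out n A1 i :> nat,
      (grid_pt i j).1.2 = step_out n A2 j :> nat &
      (grid_pt i j).2 = step_in n A3 (i + j) :> nat].
Proof.
move=> ij_le; have sum := absdiff_sum_octa x_def.
have [le1 _] := @step_out_spec n A1 i (coord_le A1) ltac:(lia).
have [le2 _] := @step_out_spec n A2 j (coord_le A2) ltac:(lia).
have [le3 _] := step_in_spec (coord_le A3) ij_le.
by rewrite /= !inordK.
Qed.

Lemma val_grid i j : i + j <= absdiff A3 n -> val (grid i j) = grid_pt i j.
Proof.
move=> ij_le; have sum := absdiff_sum_octa x_def.
suff on_grid : on_octa (grid_pt i j) by rewrite /grid insubdK.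
rewrite /on_octa; have [] := grid_pt_coords ij_le.
case: (grid_pt i j) => [[b1 b2] b3] /= -> -> ->.
have [_ ->] := @step_out_spec n A1 i (coord_le A1) ltac:(lia).
have [_ ->] := @step_out_spec n A2 j (coord_le A2) ltac:(lia).
by have [_ ->] := step_in_spec (coord_le A3) ij_le; apply/eqP; lia.
Qed.

Lemma grid00 : grid 0 0 = x.
Proof.
apply: val_inj; rewrite val_grid // x_def /grid_pt !step_out0 step_in0.
by rewrite !inord_val.
Qed.

Lemma grid_absdiff i j i' j' :
  i + j <= absdiff A3 n -> i' + j' <= absdiff A3 n ->
  let: (a1, a2, a3) := val (grid i j) in let: (b1, b2, b3) := val (grid i' j') in
  [/\ absdiff a1 b1 = absdiff i i', absdiff a2 b2 = absdiff j j' &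
      absdiff a3 b3 = absdiff (i + j) (i' + j')].
Proof.
move=> ij_le ij_le'; have := absdiff_sum_octa x_def.
rewrite !val_grid //; have [] := grid_pt_coords ij_le; have [] := grid_pt_coords ij_le'.
case: (grid_pt i j) => [[a1 a2] a3]; case: (grid_pt i' j') => [[b1 b2] b3] /=.
move=> -> -> -> -> -> -> sum.
by split; [apply: absdiff_step_out | apply: absdiff_step_out | apply: absdiff_step_in]; lia.
Qed.

Lemma grid_inj i j i' j' : i + j <= absdiff A3 n -> i' + j' <= absdiff A3 n ->
  grid i j = grid i' j' -> i = i' /\ j = j'.
Proof.
move=> ij_le ij_le' eq_grid; have := grid_absdiff ij_le ij_le'.
by rewrite eq_grid; case: (val _) => [[a1 a2] a3]; rewrite !absdiffnn /absdiff => -[]; lia.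
Qed.

Lemma grid_neq i j : i + j.+1 <= absdiff A3 n -> grid i j.+1 != x.
Proof. by move=> ij_le; apply/eqP; rewrite -{1}grid00 => /grid_inj []; lia. Qed.

Lemma grid_sedge i j i' j' : i + j <= absdiff A3 n -> i' + j' <= absdiff A3 n ->
  absdiff i i' <= 1 -> absdiff j j' <= 1 -> absdiff (i + j) (i' + j') = 1 ->
  sedge (grid i j) (grid i' j').
Proof.
move=> ij_le ij_le' di dj dij.
have neq : grid i j != grid i' j'.
  by apply/eqP => /grid_inj [] // eq_i eq_j; move: dij; rewrite eq_i eq_j absdiffnn.
have := grid_absdiff ij_le ij_le'; rewrite /sedge neq.
case: (val _) => [[a1 a2] a3]; case: (val _) => [[b1 b2] b3] [-> -> ->].
by rewrite di dj dij.
Qed.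

Lemma reach_grid i j : i + j <= absdiff A3 n -> reach x (grid i j) (i + j).
Proof.
elim: j => [|j IHj] ij_le.
  rewrite addn0 in ij_le *; elim: i ij_le => [|i IHi] i_le; first by rewrite grid00 reach_refl.
  by apply: reach_step (IHi _) (grid_sedge _ _ _ _ _); move: i_le; rewrite /absdiff; lia.
rewrite addnS; apply: reach_step (IHj _) (grid_sedge _ _ _ _ _);
  by move: ij_le; rewrite /absdiff; lia.
Qed.

End Grid.

Lemma Rinv_sqr_le (a b : nat) : (0 < a)%N -> (a <= b)%N -> / INR b ^ 2 <= / INR a ^ 2.
Proof.
move=> /leP/lt_0_INR a_gt0 /leP/le_INR ab.
by apply: Rinv_le_contravar; [apply: pow_lt | apply: pow_incr; lra].
Qed.

(* The grid points with [j > 0] are distinct, differ from [x] and lie within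
   distance [i + j] of it. *)
Lemma Zsum_ge_grid n (x : vert n) (A1 A2 A3 : coord n) m :
  val x = (A1, A2, A3) -> (m.*2 <= absdiff A3 n)%N ->
  \big[Rplus/R0]_(t : 'I_m.+1 * 'I_m) / INR (t.1 + t.2 + 1) ^ 2 <= Zsum x.
Proof.
move=> x_def m_le.
pose g (t : 'I_m.+1 * 'I_m) := grid x A1 A2 A3 t.1 t.2.+1.
have t_le (t : 'I_m.+1 * 'I_m) : (t.1 + t.2.+1 <= absdiff A3 n)%N.
  by case: t => [i j] /=; have := ltn_ord i; have := ltn_ord j; lia.
have g_inj : injective g.
  move=> [i j] [i' j'] /grid_inj /= /(_ x_def (t_le (i, j)) (t_le (i', j'))) [eq_i [eq_j]].
  by congr pair; apply: val_inj.
apply: (@Rle_trans _ (\big[Rplus/R0]_(w in [set g t | t in predT]) / INR (dist x w) ^ 2)).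
  rewrite big_imset /=; last by move=> t t' _ _; apply: g_inj.
  apply: ler_sumR => t _; apply: Rinv_sqr_le; first exact/dist_gt0/grid_neq/t_le.
  by rewrite addn1 -addnS; apply/dist_le_reach/reach_grid/t_le.
apply: ler_sumR_sub => [w /imsetP [t _ ->]|w _]; first exact/grid_neq/t_le.
exact/Rinv_ge0/pow2_ge_0.
Qed.

Lemma INR_S_gt0 (k : nat) : 0 < INR k.+1.
Proof. exact/lt_0_INR/leP. Qed.

Lemma telescope_le_sum_inv_sqr (K k : nat) :
  / INR (k + 1) - / INR (K + k + 1) <= \big[Rplus/R0]_(i < K) / INR (i + k + 1) ^ 2.
Proof.
elim: K => [|K IH]; first by rewrite big_ord0 add0n; lra.
rewrite (sumR_ord_recr K (fun i => / INR (i + k + 1) ^ 2)).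
have -> : INR (K.+1 + k + 1) = INR (K + k + 1) + 1 by rewrite !plus_INR S_INR; ring.
have y_gt0 : 0 < INR (K + k + 1) by rewrite addn1; apply: INR_S_gt0.
move: (INR (K + k + 1)) y_gt0 IH => y y_gt0 IH.
suff : / y - / (y + 1) <= / y ^ 2 by lra.
have -> : / y - / (y + 1) = / (y * (y + 1)) by field; lra.
by apply: Rinv_le_contravar; [apply: pow_lt | rewrite /= Rmult_1_r; nra].
Qed.

Lemma ln_S_le (k : nat) : ln (INR k.+2) <= ln (INR k.+1) + / INR k.+1.
Proof.
have k_gt0 := INR_S_gt0 k.
have -> : INR k.+2 = INR k.+1 * (1 + / INR k.+1) by rewrite (S_INR k.+1); field; lra.
have inv_gt0 := Rinv_0_lt_compat _ k_gt0.
rewrite ln_mult; [|lra|lra].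
suff : ln (1 + / INR k.+1) < / INR k.+1 by lra.
rewrite -{2}(ln_exp (/ INR k.+1)); apply: ln_increasing; first lra.
by apply: exp_ineq1; lra.
Qed.

Lemma ln_le_harmonic (m : nat) : ln (INR m.+1) <= \big[Rplus/R0]_(j < m) / INR (j + 1).
Proof.
elim: m => [|m IH]; first by rewrite big_ord0 /= ln_1; lra.
by rewrite (sumR_ord_recr m (fun j => / INR (j + 1))) addn1; have := ln_S_le m; lra.
Qed.

Lemma sum_grid_inv_sqr_ge_ln m :
  ln (INR m.+1) - 1 <= \big[Rplus/R0]_(t : 'I_m.+1 * 'I_m) / INR (t.1 + t.2 + 1) ^ 2.
Proof.
rewrite -(pair_bigA _ (fun (i : 'I_m.+1) (j : 'I_m) => / INR (i + j + 1) ^ 2)) exchange_big.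
pose a (j : 'I_m) := / INR (j + 1).
pose b (j : 'I_m) := / INR (m.+1 + j + 1).
have sum_b : \big[Rplus/R0]_(j < m) b j <= 1.
  apply: (@Rle_trans _ (\big[Rplus/R0]_(j < m) / INR m.+1)).
    apply: ler_sumR => j _; apply: Rinv_le_contravar; first exact: INR_S_gt0.
    by apply/le_INR/leP; lia.
  rewrite sumR_const card_ord; have := INR_S_gt0 m; rewrite S_INR => m_gt0.
  by apply: (Rmult_le_reg_r (INR m + 1)); [lra | field_simplify; lra].
apply: (@Rle_trans _ (\big[Rplus/R0]_(j < m) (a j - b j))).
  have := ln_le_harmonic m; rewrite -/(\big[Rplus/R0]_(j < m) a j).
  suff -> : \big[Rplus/R0]_(j < m) a j =
            \big[Rplus/R0]_(j < m) (a j - b j) + \big[Rplus/R0]_(j < m) b j by lra.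
  by rewrite -big_split; apply: eq_bigr => j _; rewrite /=; ring.
by apply: ler_sumR => j _; apply: telescope_le_sum_inv_sqr.
Qed.

Definition rot_pt n (p : pt n) : pt n := let: (a, b, c) := p in (b, c, a).

Lemma on_octa_rot n (v : vert n) : on_octa (rot_pt (val v)).
Proof. by have := valP v; rewrite /on_octa; case: (val v) => [[a b] c] /= /eqP ?; apply/eqP; lia. Qed.

Definition rot n (v : vert n) : vert n := exist _ (rot_pt (val v)) (on_octa_rot v).

Section Rotation.
Variable n : nat.
Implicit Types v w : vert n.

Lemma rot3 v : rot (rot (rot v)) = v.
Proof. by apply: val_inj => /=; case: (val v) => [[a b] c]. Qed.

Lemma rot_inj : injective (@rot n).
Proof. by move=> v w eq_rot; rewrite -(rot3 v) -(rot3 w) eq_rot. Qed.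

Lemma sedge_rot v w : sedge (rot v) (rot w) = sedge v w.
Proof.
rewrite /sedge (inj_eq rot_inj) /=.
case: (val v) => [[a1 a2] a3]; case: (val w) => [[b1 b2] b3] /=.
by rewrite [X in _ && X]andbA [X in _ && X]andbC.
Qed.

Lemma reach_rot v w k : reach v w k -> reach (rot v) (rot w) k.
Proof.
move=> /existsP [p /andP [vp /eqP pw]]; apply/existsP; exists (map_tuple (@rot n) p).
rewrite /= path_map last_map pw eqxx andbT.
by rewrite (eq_path (e' := @sedge n)) // => ? ?; apply: sedge_rot.
Qed.

Lemma dist_rot v w : dist (rot v) (rot w) = dist v w.
Proof.
apply: eq_find => k; apply/idP/idP; last exact: reach_rot.
by move=> /reach_rot /reach_rot; rewrite !rot3.
Qed.

Lemma Zsum_rot v : Zsum (rot v) = Zsum v.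
Proof.
rewrite /Zsum [LHS](reindex_inj rot_inj).
by apply: eq_big => [w | w _]; rewrite ?(inj_eq rot_inj) ?dist_rot.
Qed.

End Rotation.
Lemma ln6_le3 : ln 6 <= 3.
Proof.
have e_gt2 : 2 < exp 1 by have := exp_ineq1 1 ltac:(lra); lra.
have exp3E : exp 3 = exp 1 * exp 1 * exp 1 by rewrite -!exp_plus; congr exp; lra.
by rewrite -(ln_exp 3); apply: ln_le; [lra | rewrite exp3E; nra].
Qed.

Lemma Zsum_ge_ln_of_large_coord3 n (x : vert n) (A1 A2 A3 : coord n) :
  (0 < n)%N -> val x = (A1, A2, A3) -> (n <= 3 * absdiff A3 n)%N -> ln (INR n) - 4 <= Zsum x.
Proof.
move=> n_gt0 x_def A3_large; set m := (absdiff A3 n %/ 2)%N.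
have /leP/le_INR n_le : (n <= 6 * m.+1)%N by lia.
have /(Zsum_ge_grid x_def) grid_le : (m.*2 <= absdiff A3 n)%N by lia.
have := sum_grid_inv_sqr_ge_ln m.
have : ln (INR n) <= ln 6 + ln (INR m.+1).
  rewrite -ln_mult; [|lra|exact: INR_S_gt0].
  apply: ln_le; first exact/lt_0_INR/leP.
  by move: n_le; rewrite mult_INR [INR 6]INR_IZR_INZ.
by have := ln6_le3; lra.
Qed.

(* Some coordinate of [x] has absolute value at least [n / 3]; rotate it to the third place. *)
Lemma Zsum_ge_ln n (x : vert n) : (0 < n)%N -> ln (INR n) - 4 <= Zsum x.
Proof.
case x_def: (val x) => [[A1 A2] A3] n_gt0; have := absdiff_sum_octa x_def.
have [A3_large|A3_small] := leqP n (3 * absdiff A3 n).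
  by move=> _; apply: Zsum_ge_ln_of_large_coord3 x_def A3_large.
have [A1_large|A1_small] := leqP n (3 * absdiff A1 n) => [_|sum].
  rewrite -Zsum_rot; apply: (@Zsum_ge_ln_of_large_coord3 _ _ A2 A3 A1) => //.
  by rewrite /= x_def.
rewrite -Zsum_rot -Zsum_rot; apply: (@Zsum_ge_ln_of_large_coord3 _ _ A3 A1 A2) => //; last lia.
by rewrite /= x_def.
Qed.

Lemma ln_ge8 n : (6561 <= n)%N -> 8 <= ln (INR n).
Proof.
move=> /leP/le_INR; rewrite [INR 6561]INR_IZR_INZ (_ : Z.of_nat 6561 = 6561%Z) // => n_ge.
have ln3_ge1 : 1 <= ln 3.
  by rewrite -(ln_exp 1); apply: ln_le; [apply: exp_pos | apply: exp_le_3].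
apply: (@Rle_trans _ (ln (3 ^ 8))); first by rewrite ln_pow /=; lra.
by apply: ln_le; [apply: pow_lt | rewrite (_ : 3 ^ 8 = 6561) //; ring]; lra.
Qed.

Theorem theorem3 :
  exists C : R, exists N : nat,
    forall n : nat, (N <= n)%N ->
      forall u : vert n, Rle (prob_E u) (Rdiv C (ln (INR n))).
Proof.
exists 2916, 6561%N => n n_ge u.
have ln_ge := ln_ge8 n_ge.
have Zu_le (x : vert n) : Zu x <= 2 / ln (INR n).
  have := Zsum_ge_ln x (leq_trans (isT : (0 < 6561)%N) n_ge); rewrite /Zu -/(Zsum x) => Zsum_ge.
  have -> : 2 / ln (INR n) = / (ln (INR n) / 2) by field; lra.
  by apply: Rinv_le_contravar; lra.
have := prob_E_le_Zmax Zu_le u; rewrite /Rdiv; lra.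
Qed.
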